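(* Let $\|\cdot\|$ be a norm on $\mathbb{R}^d$ and let $\mathcal{X}\subseteq\mathbb{R}^d$ be closed and convex. Let $S,S_1,\dots,S_n$ be i.i.d. random variables with sample space $\mathcal{S}$, let $f:\mathcal{X}\times\mathcal{S}\to\mathbb{R}$ be convex in its first argument, write $f_i(x)=f(x;S_i)$, $F(x)=\mathbb{E}[f(x;S)]$ and $\bar F(x)=\frac1n\sum_{i=1}^n f_i(x)$. Suppose that $f$ is $L$-Lipschitz and $F$ is $\mu$-strongly convex (with $\mu>0$), and let $F^\star=\min_{x\in\mathcal{X}}F(x)$. Let $x_0,x_1,\dots,x_K\in\mathcal{X}$ be fixed candidate points (not depending on $S_1,\dots,S_n$) and let $k_{\mathrm{greedy}}\in\arg\min_{k\in\{0,1,\dots,K\}}\bar F(x_k)$. Then for all $\delta\in(0,1)$, with probability at least $1-\delta$, \[ F(x_{k_{\mathrm{greedy}}})-F^\star\le 2\max\left\{\min_{k\in\{0,\dots,K\}}F(x_k)-F^\star,\ \frac{32L^2}{\mu n}\ln\frac{2K}{\delta}\right\}. \]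
   Context: $f$ is $L$-Lipschitz means that almost surely $|f(x;S)-f(x';S)|\le L\|x-x'\|$ for all $x,x'\in\mathcal{X}$. $F$ is $\mu$-strongly convex (w.r.t. $\|\cdot\|$) means $F(u)\ge F(v)+g\cdot(u-v)+\frac{\mu}{2}\|u-v\|^2$ for all $u,v\in\mathcal{X}$ and subgradients $g$ of $F$ at $v$. The candidate points are a finite set of models among which one is selected using the validation samples $f_1,\dots,f_n$. *)

From HB Require Import structures.
From mathcomp Require Import all_boot all_order all_algebra.
From mathcomp Require Import all_classical all_reals all_analysis.
Set Implicit Arguments. Unset Strict Implicit. Unset Printing Implicit Defensive.
Import Order.TTheory GRing.Theory Num.Theory.
Import numFieldNormedType.Exports.
Local Open Scope classical_set_scope.
Local Open Scope ring_scope.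

Definition is_norm (R : realType) (d : nat) (nrm : 'rV[R]_d -> R) : Prop :=
  (forall x, nrm x = 0 -> x = 0) /\
  (forall (a : R) x, nrm (a *: x) = `|a| * nrm x) /\
  (forall x y, nrm (x + y) <= nrm x + nrm y).

Definition dotv (R : realType) (d : nat) (g v : 'rV[R]_d) : R :=
  \sum_(i < d) g 0 i * v 0 i.

Definition convex_subset (R : realType) (d : nat) (X : set 'rV[R]_d) : Prop :=
  forall x y (t : R), X x -> X y -> 0 <= t <= 1 ->
    X (t *: x + (1 - t) *: y).

Definition convex_fun_on (R : realType) (d : nat) (X : set 'rV[R]_d)
  (g : 'rV[R]_d -> R) : Prop :=
  forall x y (t : R), X x -> X y -> 0 <= t <= 1 ->
    g (t *: x + (1 - t) *: y) <= t * g x + (1 - t) * g y.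

Definition subgradient (R : realType) (d : nat) (X : set 'rV[R]_d)
  (F : 'rV[R]_d -> R) (v g : 'rV[R]_d) : Prop :=
  forall u, X u -> F v + dotv g (u - v) <= F u.

Definition strongly_convex_on (R : realType) (d : nat) (nrm : 'rV[R]_d -> R)
  (X : set 'rV[R]_d) (F : 'rV[R]_d -> R) (mu : R) : Prop :=
  forall u v g, X u -> X v -> subgradient X F v g ->
    F v + dotv g (u - v) + mu / 2 * nrm (u - v) ^+ 2 <= F u.

Definition mutually_independent (R : realType) (d0 : measure_display)
  (Omega : measurableType d0) (P : probability Omega R)
  (dS : measure_display) (Sp : measurableType dS) (I : finType)
  (Y : I -> Omega -> Sp) : Prop :=
  forall (J : {set I}) (A : I -> set Sp), (forall i, measurable (A i)) ->
    P (\bigcap_(i in [set i | i \in J]) (Y i @^-1` A i)) =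
    ((\prod_(i in J) fine (P (Y i @^-1` A i)))%R)%:E.

Definition identically_distributed (R : realType) (d0 : measure_display)
  (Omega : measurableType d0) (P : probability Omega R)
  (dS : measure_display) (Sp : measurableType dS)
  (Y Z : Omega -> Sp) : Prop :=
  forall A : set Sp, measurable A -> P (Y @^-1` A) = P (Z @^-1` A).

Definition iid_family (R : realType) (d0 : measure_display)
  (Omega : measurableType d0) (P : probability Omega R)
  (dS : measure_display) (Sp : measurableType dS) (n : nat)
  (S : Omega -> Sp) (Ss : 'I_n -> Omega -> Sp) : Prop :=
  let Y := fun o : option 'I_n => match o with None => S | Some i => Ss i end in
  (forall o, measurable_fun setT (Y o)) /\
  mutually_independent P Y /\
  (forall o, identically_distributed P (Y o) S).

Definition almost_surely_law (R : realType) (d0 : measure_display)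
  (Omega : measurableType d0) (P : probability Omega R)
  (dS : measure_display) (Sp : measurableType dS)
  (S : Omega -> Sp) (Q : Sp -> Prop) : Prop :=
  exists N : set Sp, [/\ measurable N, P (S @^-1` N) = 0%E &
                         forall s, ~ N s -> Q s].

Definition pop_risk (R : realType) (d0 : measure_display)
  (Omega : measurableType d0) (P : probability Omega R)
  (dS : measure_display) (Sp : measurableType dS) (d : nat)
  (f : 'rV[R]_d -> Sp -> R) (S : Omega -> Sp) (x : 'rV[R]_d) : R :=
  Rintegral P setT (fun w => f x (S w)).

Definition emp_risk (R : realType) (d0 : measure_display)
  (Omega : measurableType d0)
  (dS : measure_display) (Sp : measurableType dS) (d n : nat)
  (f : 'rV[R]_d -> Sp -> R) (Ss : 'I_n -> Omega -> Sp) (w : Omega)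
  (x : 'rV[R]_d) : R :=
  n%:R^-1 * \sum_(i < n) f x (Ss i w).

From HB Require Import structures.
From mathcomp Require Import all_boot all_order all_algebra.
From mathcomp Require Import all_classical all_reals all_analysis.
From mathcomp Require Import measurable_realfun ring lra.
Import Order.TTheory GRing.Theory Num.Theory.
Import numFieldNormedType.Exports.
Local Open Scope classical_set_scope.
Local Open Scope ring_scope.

(* Let [b] be a candidate of least population risk [F].  The greedy rule can
   select [x k] only if the empirical risk of [x k] is at most that of [x b],
   i.e. if the sum of the i.i.d. variables [f (x b) S_i - f (x k) S_i] is
   nonnegative; these are a.s. bounded by [a = L * nrm (x b - x k)] and have
   mean [- D] with [D = F (x k) - F (x b)].  Call [x k] bad if [F (x k) - F xstar]
   exceeds the right-hand side of the claim.  Then [D] is at least half of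
   [F (x k) - F xstar], strong convexity at the minimiser gives
   [mu * nrm (x b - x k) ^+ 2 <= 6 * (F (x k) - F xstar)], and Hoeffding's
   inequality bounds the probability that [x k] beats [x b] by [delta / K].
   A union bound over the at most [K] bad candidates concludes.
   Independence is only available for events, so Hoeffding's inequality is
   proved by rounding the variables up to a grid of mesh [D / 100]: their joint
   law becomes an explicit product of finite distributions, and the rounding
   only weakens the exponent [n D^2 / (2 a^2)] to [n D^2 / (9/4 a^2)]. *)

Section finite_hoeffding.
Context {R : realType}.

Lemma expR_le_chord (lam A y : R) : 0 < lam -> 0 < A -> - A <= y <= A ->
  expR (lam * y) <=
    (A + y) / (2 * A) * expR (lam * A) + (A - y) / (2 * A) * expR (- (lam * A)).
Proof.
move=> lam0 A0 /andP[yl yu].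
have t01 : 0 <= (A + y) / (2 * A) <= 1.
  by apply/andP; split; [apply: divr_ge0 | rewrite ler_pdivrMr]; lra.
have := @convex_expR R (Itv01 (proj1 (andP t01)) (proj2 (andP t01)))
  (lam * A) (- (lam * A)).
rewrite !convRE /= /unstable.onem.
have -> : 1 - (A + y) / (2 * A) = (A - y) / (2 * A) by field; lra.
have -> // : (A + y) / (2 * A) * (lam * A) + (A - y) / (2 * A) * - (lam * A) = lam * y.
by field; lra.
Qed.

Context {J : finType} {p : J -> R}.
Hypotheses (p_ge0 : forall j, 0 <= p j) (sum_p_le1 : \sum_j p j <= 1).

Lemma chernoff_prod (n : nat) (v : J -> R) (lam : R) : 0 <= lam ->
  \sum_(t : {ffun 'I_n -> J} | 0 <= \sum_i v (t i)) \prod_i p (t i)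
    <= (\sum_j p j * expR (lam * v j)) ^+ n.
Proof.
move=> lam0.
rewrite -[n in _ ^+ n]card_ord -prodr_const.
rewrite (bigA_distr_bigA (fun (_ : 'I_n) j => p j * expR (lam * v j))) /=.
rewrite [leRHS](bigID (fun t : {ffun 'I_n -> J} => 0 <= \sum_i v (t i))) /=.
rewrite -[leLHS]addr0; apply: lerD; last first.
  by apply: sumr_ge0 => t _; apply: prodr_ge0 => i _; rewrite mulr_ge0 ?expR_ge0.
apply: ler_sum => t vt; rewrite big_split /= -expR_sum -mulr_sumr.
rewrite -[leLHS]mulr1 ler_wpM2l ?prodr_ge0 // -expR0 ler_expR.
exact: mulr_ge0.
Qed.

Lemma expR_mean_le_chord (v : J -> R) (lam A : R) : 0 < lam -> 0 < A ->
  (forall j, - A <= v j <= A) ->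
  \sum_j p j * expR (lam * v j) <=
    (expR (lam * A) + expR (- (lam * A))) / 2 * \sum_j p j
    + (expR (lam * A) - expR (- (lam * A))) / (2 * A) * \sum_j p j * v j.
Proof.
move=> lam0 A0 vA; rewrite !mulr_sumr -big_split /=; apply: ler_sum => j _.
rewrite [leRHS](_ : _ = p j * ((A + v j) / (2 * A) * expR (lam * A)
  + (A - v j) / (2 * A) * expR (- (lam * A)))); last by field; lra.
by apply: ler_wpM2l => //; apply: expR_le_chord.
Qed.

Lemma hoeffding_mgf (v : J -> R) (A D : R) :
  (forall j, - A <= v j <= A) -> \sum_j p j * v j <= - D -> 0 < D < A ->
  exists2 lam, 0 <= lam &
    \sum_j p j * expR (lam * v j) <= expR (- ((D / A) ^+ 2 / 2)).
Proof.
move=> vA mean /andP[D0 DA]; have A0 : 0 < A by lra.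
set q := D / A.
have q0 : 0 < q by apply: divr_gt0.
have q1 : q < 1 by rewrite ltr_pdivrMr // mul1r.
(* Taking [expR (lam * A) = E] makes the chord bound equal to [sqrt (1 - q ^+ 2)]. *)
set E := Num.sqrt ((1 + q) / (1 - q)).
have E2 : E ^+ 2 = (1 + q) / (1 - q) by rewrite sqr_sqrtr // divr_ge0 //; lra.
have E1 : 1 < E by rewrite -sqrtr1 ltr_sqrt // ltr_pdivlMr; lra.
have Ei0 : 0 < E^-1 by rewrite invr_gt0; lra.
have Ei1 : E^-1 < 1 by rewrite invf_lt1 //; lra.
have lam0 : 0 < ln E / A by rewrite divr_gt0 // ln_gt0.
exists (ln E / A); first exact: ltW.
apply: (le_trans (expR_mean_le_chord _ _ _ lam0 A0 vA)).
rewrite expRN mulfVK ?gt_eqF // lnK ?posrE; last lra.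
have cosh0 : 0 <= (E + E^-1) / 2 by apply: divr_ge0; lra.
have sinh0 : 0 <= (E - E^-1) / (2 * A) by apply: divr_ge0; lra.
apply: le_trans (lerD (ler_wpM2l cosh0 sum_p_le1) (ler_wpM2l sinh0 mean)) _.
have -> : (E + E^-1) / 2 * 1 + (E - E^-1) / (2 * A) * - D = (1 + q) / E.
  have E0 : E != 0 by rewrite gt_eqF //; lra.
  apply: (mulIf E0); rewrite mulfVK //.
  have -> : ((E + E^-1) / 2 * 1 + (E - E^-1) / (2 * A) * - D) * E
      = ((1 - q) * E ^+ 2 + (1 + q)) / 2 by rewrite /q; field; lra.
  by rewrite E2; field; lra.
rewrite -(ler_pXn2r (n := 2)) ?nnegrE ?expR_ge0 ?divr_ge0 //; try lra.
rewrite expr_div_n E2 -expRM_natr.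
have -> : (1 + q) ^+ 2 / ((1 + q) / (1 - q)) = 1 - q ^+ 2 by field; lra.
have := expR_ge1Dx (- q ^+ 2); have -> : - (q ^+ 2 / 2) * 2%:R = - q ^+ 2 by field.
lra.
Qed.

Lemma hoeffding_fin (n : nat) (v : J -> R) (A D : R) :
  (forall j, - A <= v j <= A) -> \sum_j p j * v j <= - D -> 0 < D < A ->
  \sum_(t : {ffun 'I_n -> J} | 0 <= \sum_i v (t i)) \prod_i p (t i)
    <= expR (- (n%:R * (D / A) ^+ 2 / 2)).
Proof.
move=> vA mean DA; have [lam lam0 mgf] := hoeffding_mgf _ _ _ vA mean DA.
apply: (le_trans (chernoff_prod n v lam lam0)).
have mgf0 : 0 <= \sum_j p j * expR (lam * v j).
  by apply: sumr_ge0 => j _; rewrite mulr_ge0 ?expR_ge0.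
apply: (le_trans (lerXn2r n _ _ mgf)); rewrite ?nnegrE ?expR_ge0 //.
by rewrite -expRM_natr mulrC mulrN mulrA.
Qed.

End finite_hoeffding.

Lemma grid_exponent_le {R : realType} (n : nat) (a D : R) : 0 < D -> D <= a ->
  n%:R * D ^+ 2 / (9 / 4 * a ^+ 2) <= n%:R * ((D - D / 100) / (a + D / 100)) ^+ 2 / 2.
Proof.
move=> D0 Da; have a0 : 0 < a by lra.
set r := D / a.
have r0 : 0 < r by apply: divr_gt0.
have Dr : D = r * a by rewrite /r mulfVK // gt_eqF.
have key : 99 / 101 * r <= (D - D / 100) / (a + D / 100).
  by rewrite ler_pdivlMr ?Dr; nra.
have -> : n%:R * D ^+ 2 / (9 / 4 * a ^+ 2) = n%:R * (4 / 9 * r ^+ 2).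
  by rewrite Dr; field; lra.
by rewrite -[leRHS]mulrA ler_wpM2l //; nra.
Qed.

Section measure_facts.
Context {d} {T : measurableType d} {R : realType}.

Lemma measure_bigsetU_le (mu : {measure set T -> \bar R}) (I : finType)
    (Q : pred I) (F : I -> set T) : (forall i, measurable (F i)) ->
  (mu (\big[setU/set0]_(i | Q i) F i) <= \sum_(i | Q i) mu (F i))%E.
Proof.
move=> mF.
suff [] : measurable (\big[setU/set0]_(i | Q i) F i) /\
  (mu (\big[setU/set0]_(i | Q i) F i) <= \sum_(i | Q i) mu (F i))%E by [].
apply: (big_ind2 (fun U s => measurable U /\ (mu U <= s)%E)) => //.
- by rewrite measure0.
- move=> U1 s1 U2 s2 [mU1 le1] [mU2 le2]; split; first exact: measurableU.
  exact: le_trans (measureU2 mu mU1 mU2) (leeD le1 le2).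
Qed.

Lemma exists_outside_null (P : probability T R) (N : set T) :
  P N = 0%E -> exists s, ~ N s.
Proof.
move=> PN; apply: contrapT => allN.
have NT : N = setT by apply/seteqP; split => // s _; apply: contrapT => Ns; apply: allN; exists s.
by move: PN; rewrite NT probability_setT => /eqP; rewrite onee_eq0.
Qed.

Variable P : probability T R.

Lemma integrable_bounded (g : T -> R) (M : R) :
  measurable_fun setT g -> (forall x, `|g x| <= M) -> P.-integrable setT (EFin \o g).
Proof.
move=> mg gM; apply: measurable_bounded_integrable => //.
  by rewrite (le_lt_trans (probability_le1 _ measurableT)) ?ltry.
rewrite /bounded_near; near=> M' => x _; apply: le_trans (gM x) _.
by near: M'; apply: nbhs_pinfty_ge; exact: num_real.
Unshelve. all: end_near.
Qed.

Lemma Rintegral_ge_lb (g : T -> R) (a : R) :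
  measurable_fun setT g -> (forall x, - a <= g x <= a) -> - a <= \int[P]_(x in setT) g x.
Proof.
move=> mg ga.
have ig : P.-integrable setT (EFin \o g).
  by apply: (integrable_bounded g a mg) => x; rewrite ler_norml ga.
have := @le_Rintegral _ _ _ P setT (cst (- a)) g measurableT
  (finite_measure_integrable_cst _ _ measurableT) ig (fun x _ => proj1 (andP (ga x))).
by rewrite Rintegral_cst // (congr1 fine (probability_setT P)) mulr1.
Qed.

Lemma prob_ge_union_bound (I : finType) (bad : pred I) (E : I -> set T) (G : set T)
    (eps delta : R) :
  (forall i, measurable (E i)) -> (forall i, bad i -> (P (E i) <= eps%:E)%E) ->
  #|bad|%:R * eps <= delta -> measurable G ->
  (forall w, (forall i, bad i -> ~ E i w) -> G w) -> ((1 - delta)%:E <= P G)%E.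
Proof.
move=> mE PE card_eps mG EG.
pose U := \big[setU/set0]_(i | bad i) E i.
have mU : measurable U by exact: bigsetU_measurable.
have PU : (P U <= delta%:E)%E.
  apply: (le_trans (measure_bigsetU_le P _ bad _ mE)).
  apply: (@le_trans _ _ (\sum_(i | bad i) eps%:E)%E); first exact: lee_sum.
  by rewrite sumEFin lee_fin sumr_const -mulr_natl.
have : (P (~` U) <= P G)%E.
  apply: le_measure; rewrite ?inE //; first exact: measurableC.
  move=> w /= Uw; apply: EG => i bi Ei; apply: Uw.
  by rewrite /U (bigD1 i) //=; left.
rewrite probability_setC //; apply: le_trans.
by rewrite -(fineK (fin_num_measure P _ mU)) -EFinB lee_fin lerB // -lee_fin fineK ?fin_num_measure.
Qed.

Lemma measurable_argmin_event (I : finType) (g : I -> T -> R) (good : pred I) :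
  (forall i, measurable_fun setT (g i)) ->
  measurable [set w | forall k, (forall j, g k w <= g j w) -> good k].
Proof.
move=> mg.
have -> : [set w | forall k, (forall j, g k w <= g j w) -> good k] =
    \bigcap_(k in [set k | ~~ good k]) \bigcup_j ~` [set w | g k w <= g j w].
  apply/seteqP; split => w /= Hw.
    move=> k /= /negP gk; apply: contrapT => nU; apply: gk; apply: Hw => j.
    by apply: contrapT => nle; apply: nU; exists j.
  move=> k kmin; apply/negPn/negP => gk; have [j _ /=] := Hw k gk.
  by apply; exact: kmin.
apply: fin_bigcap_measurable => [|k _]; first exact: finite_finset.
apply: fin_bigcup_measurable => [|j _]; first exact: finite_finset.
by apply: measurableC; rewrite -[X in measurable X]setTI; exact: measurable_fun_le.
Qed.

Variables (J : finType) (io : T -> J).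
Hypothesis mio : forall j, measurable (io @^-1` [set j]).

Lemma fin_valued_sum_indic (w : J -> R) x :
  w (io x) = \sum_j w j * \1_(io @^-1` [set j]) x.
Proof.
rewrite (bigD1 (io x)) //= big1 ?addr0; first by rewrite indicE mem_set // mulr1.
by move=> j jx; rewrite indicE memNset ?mulr0 // => /= xj; rewrite xj eqxx in jx.
Qed.

Let integrable_fiber (c : R) j :
  P.-integrable setT (fun x => (c * \1_(io @^-1` [set j]) x)%:E).
Proof.
by under eq_fun do rewrite EFinM; apply: integrableZl => //; exact: integrable_indic.
Qed.

Lemma integrable_fin_valued (w : J -> R) : P.-integrable setT (fun x => (w (io x))%:E).
Proof.
under eq_fun do rewrite fin_valued_sum_indic -sumEFin.
by apply: integrable_sum => // j _; exact: integrable_fiber.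
Qed.

Lemma Rintegral_fin_valued (w : J -> R) :
  \int[P]_(x in setT) w (io x) = \sum_j w j * fine (P (io @^-1` [set j])).
Proof.
rewrite /Rintegral; under eq_integral do rewrite fin_valued_sum_indic -sumEFin.
have int_fiber j : (\int[P]_(x in setT) (w j * \1_(io @^-1` [set j]) x)%:E
    = (w j)%:E * P (io @^-1` [set j]))%E.
  under eq_integral do rewrite EFinM.
  by rewrite integralZl ?integral_indic ?setIT //; exact: integrable_indic.
rewrite integral_sum // -sum_fine => [|j _]; last by rewrite int_fiber fin_numM ?fin_num_measure.
by apply: eq_bigr => j _; rewrite int_fiber fineM ?fin_num_measure.
Qed.

Lemma sum_fin_valued_prob : \sum_j fine (P (io @^-1` [set j])) = 1.
Proof.
have := Rintegral_fin_valued (fun _ => 1); under eq_bigr do rewrite mul1r.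
by move=> <-; rewrite Rintegral_cst // mul1r; exact: (congr1 fine (probability_setT P)).
Qed.

End measure_facts.

Lemma grid_approx {d} {T : measurableType d} {R : realType} (g : T -> R) (a eps : R) :
  measurable_fun setT g -> (forall s, - a <= g s <= a) -> 0 <= a -> 0 < eps ->
  exists M (io : T -> 'I_M.+1) (v : 'I_M.+1 -> R),
    [/\ forall j, measurable (io @^-1` [set j]),
        forall s, g s <= v (io s) <= g s + eps &
        forall j, - (a + eps) <= v j <= a + eps].
Proof.
move=> mg ga a0 eps0.
pose u s := (g s + a) / eps.
have u0 s : 0 <= u s by apply: divr_ge0; [have := ga s | ]; lra.
pose M := Num.truncn (2 * a / eps).
have uM s : (Num.truncn (u s) <= M)%N.
  by apply: le_truncn; rewrite ler_pM2r ?invr_gt0 //; have := ga s; lra.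
pose io s := (inord (Num.truncn (u s)) : 'I_M.+1).
have ioE s : val (io s) = Num.truncn (u s) by apply: inordK; rewrite ltnS.
pose v (j : 'I_M.+1) := - a + eps * (val j).+1%:R.
exists M, io, v; split.
- move=> j; have -> : io @^-1` [set j] = setT `&` u @^-1` `[(val j)%:R, (val j).+1%:R[.
    apply/seteqP; split => s /=.
      by move=> <-; split => //; rewrite in_itv /= ioE; exact: truncn_itv.
    move=> [_]; rewrite in_itv /= => us; apply: val_inj.
    by rewrite /= ioE; apply/eqP; rewrite truncn_eq // us.
  by apply: measurable_funM => //; apply: measurable_funD.
- move=> s; rewrite /v ioE; have /andP[lo hi] := truncn_itv (u0 s).
  have ue : eps * u s = g s + a by rewrite /u mulrC mulfVK ?gt_eqF.
  rewrite -natr1 in hi *; apply/andP; split; nra.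
- move=> j; rewrite /v.
  have jM : ((val j)%:R : R) <= M%:R by rewrite ler_nat -ltnS ltn_ord.
  have /andP[lo _] := truncn_itv (divr_ge0 (mulr_ge0 (ler0n R 2) a0) (ltW eps0)).
  have : eps * (val j)%:R <= 2 * a by rewrite -ler_pdivlMl // mulrC; lra.
  have : 0 <= eps * (val j)%:R by rewrite mulr_ge0 // ltW.
  by rewrite -[(val j).+1]addn1 natrD mulrDr mulr1 => *; apply/andP; split; lra.
Qed.

Section almost_sure_bound.
Context {R : realType} {d0 : measure_display} {Omega : measurableType d0}
  {P : probability Omega R} {dS : measure_display} {Sp : measurableType dS}
  {S : Omega -> Sp}.
Hypothesis measurable_S : measurable_fun setT S.

Lemma as_bounded_version (h : Sp -> R) (a : R) (N : set Sp) :
  measurable_fun setT h -> measurable N -> P (S @^-1` N) = 0%E ->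
  (forall s, ~ N s -> `|h s| <= a) ->
  exists c : Sp -> R, [/\ measurable_fun setT c, forall s, - a <= c s <= a,
    forall s, ~ N s -> c s = h s &
    \int[P]_(w in setT) c (S w) = \int[P]_(w in setT) h (S w)].
Proof.
move=> mh mN PN hN.
have a0 : 0 <= a.
  have [w /= Nw] := exists_outside_null P _ PN.
  exact: le_trans (normr_ge0 _) (hN _ Nw).
pose c s := Num.min a (Num.max (- a) (h s)).
have ch s : ~ N s -> c s = h s.
  by move=> /hN; rewrite ler_norml => /andP[hl hu]; rewrite /c (max_r hl) (min_r hu).
have mc : measurable_fun setT c by apply: measurable_minr => //; exact: measurable_maxr.
exists c; split => //.
  by move=> s; rewrite /c le_min ge_min lexx le_max lexx !andbT; lra.
rewrite /Rintegral; congr fine; apply: ae_eq_integral => //.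
1, 2: by apply/measurable_EFinP; exact: measurableT_comp.
exists (S @^-1` N); split => //; first by rewrite -[_ @^-1` _]setTI; exact: measurable_S.
by move=> w /= cw; apply: contrapT => Nw; apply: cw => _; rewrite ch.
Qed.

Lemma Rintegral_as_ge (h : Sp -> R) (a : R) (N : set Sp) :
  measurable_fun setT h -> measurable N -> P (S @^-1` N) = 0%E ->
  (forall s, ~ N s -> `|h s| <= a) -> - a <= \int[P]_(w in setT) h (S w).
Proof.
move=> mh mN PN hN; have [c [mc ca _ <-]] := as_bounded_version _ _ _ mh mN PN hN.
exact: (Rintegral_ge_lb P _ _ (measurableT_comp mc measurable_S) (fun w => ca (S w))).
Qed.

End almost_sure_bound.

Section iid.
Context {R : realType} {d0 : measure_display} {Omega : measurableType d0}
  {P : probability Omega R} {dS : measure_display} {Sp : measurableType dS}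
  {n : nat} {S : Omega -> Sp} {Ss : 'I_n -> Omega -> Sp}.
Hypothesis iid : iid_family P S Ss.

Let measurable_S : measurable_fun setT S := (proj1 iid) None.
Let measurable_Ss i : measurable_fun setT (Ss i) := (proj1 iid) (Some i).

Let Ss_ident i (A : set Sp) : measurable A -> P (Ss i @^-1` A) = P (S @^-1` A).
Proof. exact: (proj2 (proj2 iid)) (Some i) A. Qed.

Let measurable_preimage (Z : Omega -> Sp) (A : set Sp) :
  measurable_fun setT Z -> measurable A -> measurable (Z @^-1` A).
Proof. by move=> mZ mA; rewrite -[_ @^-1` _]setTI; exact: mZ. Qed.

Lemma iid_cylinder (A : 'I_n -> set Sp) : (forall i, measurable (A i)) ->
  P (\bigcap_i Ss i @^-1` A i) = (\prod_i fine (P (S @^-1` A i)))%:E.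
Proof.
move=> mA; have [_ [indep ident]] := iid.
pose A' o := if o is Some i then A i else setT.
have := indep [set: option 'I_n]%SET A' (fun o => if o is Some i then mA i else measurableT).
have -> : \bigcap_(o in [set o | o \in [set: option 'I_n]%SET])
    ((if o is Some i then Ss i else S) @^-1` A' o) = \bigcap_i Ss i @^-1` A i.
  apply/seteqP; split => w Hw; first by move=> i _; apply: (Hw (Some i)); rewrite /= finset.in_setT.
  by move=> [i|] _ //; exact: Hw.
move=> ->; congr EFin.
rewrite (eq_bigl xpredT); last by move=> o; exact: finset.in_setT.
rewrite (bigD1 None) //= preimage_setT (congr1 fine (probability_setT P)) mul1r.
rewrite (reindex_omap Some id) //=; last by case.
rewrite (eq_bigl xpredT); last by move=> i; rewrite eqxx.
by apply: eq_bigr => i _; rewrite Ss_ident.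
Qed.

Lemma iid_fin_valued_le (J : finType) (io : Sp -> J) (Q : pred {ffun 'I_n -> J})
    (E : set Omega) :
  (forall j, measurable (io @^-1` [set j])) -> measurable E ->
  (forall w, E w -> Q [ffun i => io (Ss i w)]) ->
  (P E <= (\sum_(t | Q t) \prod_i fine (P (S @^-1` (io @^-1` [set t i]))))%:E)%E.
Proof.
move=> mio mE EQ.
pose cyl (t : {ffun 'I_n -> J}) := \bigcap_i Ss i @^-1` (io @^-1` [set t i]).
have mcyl t : measurable (cyl t).
  by apply: fin_bigcap_measurable => [|i _]; [exact: finite_finset | exact: measurable_preimage].
have sub : E `<=` \big[setU/set0]_(t | Q t) cyl t.
  move=> w Ew; rewrite (bigD1 [ffun i => io (Ss i w)]) ?EQ //=; left.
  by move=> i _ /=; rewrite ffunE.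
have mU : measurable (\big[setU/set0]_(t | Q t) cyl t) by exact: bigsetU_measurable.
apply: (le_trans (le_measure P (mem_set mE) (mem_set mU) sub)).
apply: (le_trans (measure_bigsetU_le P _ Q _ mcyl)).
rewrite -sumEFin; apply: lee_sum => t _.
by have := iid_cylinder (fun i => io @^-1` [set t i]) (fun i => mio _); move=> <-.
Qed.

Lemma measurable_sum_ge0 (h : Sp -> R) : measurable_fun setT h ->
  measurable [set w | 0 <= \sum_i h (Ss i w)].
Proof.
move=> mh; rewrite -[X in measurable X]setTI.
apply: measurable_fun_le => //; apply: measurable_sum => i.
exact: measurableT_comp.
Qed.

Lemma hoeffding_bounded (g : Sp -> R) (a D : R) :
  measurable_fun setT g -> (forall s, - a <= g s <= a) ->
  \int[P]_(w in setT) g (S w) = - D -> 0 < D ->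
  (P [set w | (0 <= \sum_i g (Ss i w))%R] <= (expR (- (n%:R * D ^+ 2 / (9 / 4 * a ^+ 2))))%:E)%E.
Proof.
move=> mg ga meanD D0.
have mgS : measurable_fun setT (g \o S) by exact: measurableT_comp.
have Da : D <= a by have := Rintegral_ge_lb P _ _ mgS (fun w => ga (S w)); rewrite meanD; lra.
set eps := D / 100; have eps0 : 0 < eps by rewrite /eps; lra.
have [M [io [v [mio gv vb]]]] := grid_approx _ _ _ mg ga (ltW (lt_le_trans D0 Da)) eps0.
pose p j := fine (P (S @^-1` (io @^-1` [set j]))).
have mioS j : measurable ((io \o S) @^-1` [set j]).
  exact: (measurable_preimage _ _ measurable_S (mio j)).
have p_ge0 j : 0 <= p j by apply: fine_ge0; exact: measure_ge0.
have sum_p : \sum_j p j <= 1 by rewrite (sum_fin_valued_prob P _ _ mioS).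
have mean_v : \sum_j p j * v j <= - (D - eps).
  under eq_bigr do rewrite mulrC; rewrite -(Rintegral_fin_valued P _ _ mioS).
  have igS : P.-integrable setT (EFin \o (g \o S)).
    by apply: (integrable_bounded P _ a mgS) => w; rewrite ler_norml ga.
  have igSe := integrableD measurableT igS (finite_measure_integrable_cst P eps measurableT).
  apply: (le_trans (le_Rintegral _ (integrable_fin_valued P _ _ mioS v) igSe _)) => // [w _|].
    by case/andP: (gv (S w)).
  rewrite RintegralD //; last exact: finite_measure_integrable_cst.
  rewrite meanD Rintegral_cst // (congr1 fine (probability_setT P)) mulr1; lra.
apply: (le_trans (iid_fin_valued_le _ _ (fun t => 0 <= \sum_i v (t i)) _ mio
  (measurable_sum_ge0 _ mg) _)).
  move=> w /= gpos; apply: (le_trans gpos); apply: ler_sum => i _.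
  by rewrite ffunE; case/andP: (gv (Ss i w)).
rewrite lee_fin; apply: (le_trans (hoeffding_fin p_ge0 sum_p n v _ _ vb mean_v _)).
  by rewrite /eps; apply/andP; split; lra.
by rewrite ler_expR lerN2 grid_exponent_le.
Qed.

Lemma hoeffding_as (h : Sp -> R) (a D : R) (N : set Sp) :
  measurable_fun setT h -> measurable N -> P (S @^-1` N) = 0%E ->
  (forall s, ~ N s -> `|h s| <= a) ->
  \int[P]_(w in setT) h (S w) = - D -> 0 < D ->
  (P [set w | (0 <= \sum_i h (Ss i w))%R] <=
    (expR (- (n%:R * D ^+ 2 / (9 / 4 * a ^+ 2))))%:E)%E.
Proof.
move=> mh mN PN hN meanD D0.
have [c [mc ca ch cint]] := as_bounded_version measurable_S _ _ _ mh mN PN hN.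
pose Nn := \big[setU/set0]_i (Ss i @^-1` N).
have mN_i i : measurable (Ss i @^-1` N) by exact: measurable_preimage.
have mNn : measurable Nn by exact: bigsetU_measurable.
have PNn : (P Nn <= 0)%E.
  apply: le_trans (measure_bigsetU_le P _ xpredT _ mN_i) _.
  by rewrite big1 // => i _; exact: etrans (Ss_ident i _ mN) PN.
have sub : [set w | (0 <= \sum_i h (Ss i w))%R] `<=` [set w | (0 <= \sum_i c (Ss i w))%R] `|` Nn.
  move=> w /= hpos; have [[i Ni]|noN] := pselect (exists i, N (Ss i w)).
    by right; rewrite /Nn (bigD1 i) //=; left.
  left; rewrite (eq_bigr (fun i => h (Ss i w))) // => i _.
  by apply: ch => Ni; apply: noN; exists i.
apply: (le_trans (le_measure P _ _ sub)); rewrite ?inE.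
- exact: measurable_sum_ge0.
- by apply: measurableU => //; exact: measurable_sum_ge0.
apply: (le_trans (measureU2 P (measurable_sum_ge0 _ mc) mNn)).
apply: le_trans (leeD (lexx _) PNn) _; rewrite adde0.
apply: hoeffding_bounded => //.
by rewrite cint.
Qed.

End iid.

Lemma bigmin_attained {disp} {T : orderType disp} {I : finType} (i0 : I) (F : I -> T) :
  exists2 b, \big[Order.min/F i0]_i F i = F b & forall i, (F b <= F i)%O.
Proof.
case: (arg_minP F (i0 := i0) isT) => b _ b_min; exists b => [|i]; last exact: b_min.
apply/eqP; rewrite eq_le bigmin_le /=; apply/bigmin_geP; split => [|i _]; exact: b_min.
Qed.

Lemma card_ord_notin_le (K : nat) (A : {pred 'I_K.+1}) (b : 'I_K.+1) :
  b \notin A -> (#|A| <= K)%N.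
Proof.
move=> bA; have /subset_leq_card : A \subset predC1 b.
  by apply/fintype.subsetP => k; rewrite !inE; apply: contraTneq => ->.
by rewrite cardC1 card_ord.
Qed.

Section norm_facts.
Context {R : realType} {d : nat} {nrm : 'rV[R]_d -> R}.
Hypothesis nrmP : is_norm nrm.

Lemma normN v : nrm (- v) = nrm v.
Proof. by have [_ [nrmZ _]] := nrmP; rewrite -scaleN1r nrmZ normrN normr1 mul1r. Qed.

Lemma norm_ge0 v : 0 <= nrm v.
Proof.
have [_ [nrmZ nrmD]] := nrmP.
have nrm0 : nrm 0 = 0 by rewrite -(scale0r 0) nrmZ normr0 mul0r.
by have := nrmD v (- v); rewrite subrr nrm0 normN; lra.
Qed.

Lemma norm_sub_le u v w : nrm (u - v) <= nrm (u - w) + nrm (v - w).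
Proof.
have [_ [_ nrmD]] := nrmP.
have := nrmD (u - w) (w - v).
by rewrite addrA subrK -[w - v]opprB normN.
Qed.

End norm_facts.

Lemma strongly_convex_min_gap {R : realType} {d : nat} (nrm : 'rV[R]_d -> R)
    (X : set 'rV[R]_d) (F : 'rV[R]_d -> R) (mu : R) (xs u : 'rV[R]_d) :
  strongly_convex_on nrm X F mu -> X xs -> (forall y, X y -> F xs <= F y) -> X u ->
  mu / 2 * nrm (u - xs) ^+ 2 <= F u - F xs.
Proof.
move=> scF Xxs xs_min Xu.
have dot0 v : dotv 0 v = 0 by rewrite /dotv big1 // => i _; rewrite mxE mul0r.
have sub0 : subgradient X F xs 0 by move=> w Xw; rewrite dot0 addr0; exact: xs_min.
by have := scF u xs 0 Xu Xxs sub0; rewrite dot0 addr0; lra.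
Qed.

Section selection_arithmetic.
Context {R : realType}.

Lemma gap_sq_lower_bound (mu Dk Db r rk rb : R) :
  0 < mu -> 0 <= Db -> 2 * Db < Dk -> r <= rb + rk -> 0 <= r -> 0 <= rb -> 0 <= rk ->
  mu / 2 * rb ^+ 2 <= Db -> mu / 2 * rk ^+ 2 <= Dk ->
  mu * Dk * r ^+ 2 <= 24 * (Dk - Db) ^+ 2.
Proof.
move=> mu0 Db0 DbDk rr r0 rb0 rk0 hb hk.
have r2 : mu * r ^+ 2 <= 6 * Dk.
  have : r ^+ 2 <= (rb + rk) ^+ 2 by apply: lerXn2r; rewrite ?nnegrE //; lra.
  move=> /(ler_wpM2l (ltW mu0)).
  have := mulr_ge0 (ltW mu0) (sqr_ge0 (rb - rk)); nra.
have half : Dk ^+ 2 <= 4 * (Dk - Db) ^+ 2 by nra.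
have Dk0 : 0 <= Dk by lra.
have := ler_wpM2l Dk0 r2; nra.
Qed.

Lemma hoeffding_exponent_le (N K mu L delta D Dk r : R) :
  0 < N -> 1 <= K -> 0 < mu -> 0 < delta ->
  0 < D <= L * r -> mu * Dk * r ^+ 2 <= 24 * D ^+ 2 ->
  2 * (32 * L ^+ 2 / (mu * N) * ln (2 * K / delta)) < Dk ->
  expR (- (N * D ^+ 2 / (9 / 4 * (L * r) ^+ 2))) <= delta / K.
Proof.
move=> N0 K1 mu0 delta0 /andP[D0 DLr] Dk_r Dk_big.
set l := ln (2 * K / delta).
have Lr0 : 0 < (L * r) ^+ 2 by rewrite exprn_gt0 //; lra.
have l_le : l <= N * D ^+ 2 / (9 / 4 * (L * r) ^+ 2).
  rewrite ler_pdivlMr; last by rewrite mulr_gt0.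
  have muN0 : 0 < mu * N by rewrite mulr_gt0.
  have e : 2 * (32 * L ^+ 2 / (mu * N) * l) = 64 * L ^+ 2 * l / (mu * N) by field; lra.
  move: Dk_big; rewrite e ltr_pdivrMr // => /ltW /(ler_wpM2r (sqr_ge0 r)) Dk_l.
  have := ler_wpM2l (ltW N0) Dk_r; have := mulr_ge0 (ltW N0) (sqr_ge0 D).
  rewrite exprMn; nra.
apply: (@le_trans _ _ (expR (- l))); first by rewrite ler_expR lerN2.
rewrite expRN lnK ?posrE ?divr_gt0 ?mulr_gt0 //; try lra.
rewrite invf_div ler_pdivrMr ?mulr_gt0 //; last lra.
have -> : delta / K * (2 * K) = 2 * delta by field; lra.
lra.
Qed.

Lemma natr_mul_div_le (m K : nat) (delta : R) : (m <= K)%N -> 0 <= delta ->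
  m%:R * (delta / K%:R) <= delta.
Proof.
move=> mK delta0; have [K0|K_gt0] := posnP K; first by rewrite K0 invr0 !mulr0.
by rewrite mulrA ler_pdivrMr ?ltr0n // mulrC ler_wpM2l // ler_nat.
Qed.

End selection_arithmetic.

Section greedy_selection.
Context {R : realType} {d : nat} {nrm : 'rV[R]_d -> R} {X : set 'rV[R]_d}
  {d0 : measure_display} {Omega : measurableType d0} {P : probability Omega R}
  {dS : measure_display} {Sp : measurableType dS} {n : nat}
  {S : Omega -> Sp} {Ss : 'I_n -> Omega -> Sp} {f : 'rV[R]_d -> Sp -> R}
  {L mu : R} {xstar : 'rV[R]_d} {N : set Sp}.
Hypotheses (nrmP : is_norm nrm) (n_gt0 : (0 < n)%N) (iid : iid_family P S Ss)
  (f_meas : forall y, X y -> measurable_fun setT (f y))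
  (f_int : forall y, X y -> P.-integrable setT (fun w => (f y (S w))%:E))
  (mN : measurable N) (PN : P (S @^-1` N) = 0%E)
  (f_lip : forall s, ~ N s -> forall y y', X y -> X y' ->
     `|f y s - f y' s| <= L * nrm (y - y'))
  (mu_gt0 : 0 < mu) (F_sc : strongly_convex_on nrm X (pop_risk P f S) mu)
  (Xxs : X xstar) (xs_min : forall y, X y -> pop_risk P f S xstar <= pop_risk P f S y).

Local Notation F := (pop_risk P f S).

Lemma emp_risk_le_sumE (u v : 'rV[R]_d) (w : Omega) :
  (emp_risk f Ss w u <= emp_risk f Ss w v) = (0 <= \sum_i (f v (Ss i w) - f u (Ss i w))).
Proof. by rewrite /emp_risk ler_pM2l ?invr_gt0 ?ltr0n // sumrB subr_ge0. Qed.

Lemma measurable_emp_risk (u : 'rV[R]_d) : X u ->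
  measurable_fun setT (fun w => emp_risk f Ss w u).
Proof.
move=> Xu; apply: measurable_funM => //; apply: measurable_sum => i.
exact: measurableT_comp (f_meas _ Xu) (proj1 iid (Some i)).
Qed.

Lemma prob_emp_prefers_le (u v : 'rV[R]_d) (K delta : R) :
  X u -> X v -> 1 <= K -> 0 < delta ->
  2 * Num.max (F u - F xstar) (32 * L ^+ 2 / (mu * n%:R) * ln (2 * K / delta))
    < F v - F xstar ->
  (P [set w | (0 <= \sum_i (f u (Ss i w) - f v (Ss i w)))%R] <= (delta / K)%:E)%E.
Proof.
move=> Xu Xv K1 delta0 v_bad.
have [u_le c_le] : 2 * (F u - F xstar) < F v - F xstar /\
    2 * (32 * L ^+ 2 / (mu * n%:R) * ln (2 * K / delta)) < F v - F xstar.
  by split; apply: le_lt_trans v_bad; rewrite ler_pM2l // le_max lexx ?orbT.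
have Fu_ge := xs_min _ Xu.
pose h s := f u s - f v s.
have mh : measurable_fun setT h by apply: measurable_funB; exact: f_meas.
have hN s : ~ N s -> `|h s| <= L * nrm (u - v) by move=> Ns; exact: f_lip.
have h_mean : \int[P]_(w in setT) h (S w) = - (F v - F u).
  by rewrite RintegralB ?f_int // opprB.
have gap0 : 0 < F v - F u by lra.
have gap_le : F v - F u <= L * nrm (u - v).
  by have := Rintegral_as_ge (proj1 iid None) _ _ _ mh mN PN hN; rewrite h_mean; lra.
apply: (le_trans (hoeffding_as iid _ _ _ _ mh mN PN hN h_mean gap0)); rewrite lee_fin.
apply: (hoeffding_exponent_le _ _ mu _ _ _ (F v - F xstar)) => //.
- by rewrite ltr0n.
- by rewrite gap0 gap_le.
have -> : F v - F u = (F v - F xstar) - (F u - F xstar) by ring.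
apply: (gap_sq_lower_bound mu _ _ _ (nrm (v - xstar)) (nrm (u - xstar))) => //;
  rewrite ?norm_ge0 ?norm_sub_le ?subr_ge0 ?xs_min //;
  by apply: strongly_convex_min_gap F_sc Xxs xs_min _.
Qed.

End greedy_selection.

Theorem proposition1
  (R : realType) (d : nat) (nrm : 'rV[R]_d -> R) (X : set 'rV[R]_d)
  (d0 : measure_display) (Omega : measurableType d0) (P : probability Omega R)
  (dS : measure_display) (Sp : measurableType dS) (n : nat)
  (S : Omega -> Sp) (Ss : 'I_n -> Omega -> Sp)
  (f : 'rV[R]_d -> Sp -> R) (L mu : R)
  (xstar : 'rV[R]_d) (K : nat) (x : 'I_K.+1 -> 'rV[R]_d) (delta : R) :
  is_norm nrm ->
  closed X -> convex_subset X ->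
  (0 < n)%N ->
  iid_family P S Ss ->
  (forall s, convex_fun_on X (fun y => f y s)) ->
  (forall y, X y -> measurable_fun setT (f y)) ->
  (forall y, X y -> P.-integrable setT (fun w => (f y (S w))%:E)) ->
  almost_surely_law P S (fun s => forall y y', X y -> X y' ->
     `|f y s - f y' s| <= L * nrm (y - y')) ->
  0 < mu ->
  strongly_convex_on nrm X (pop_risk P f S) mu ->
  X xstar -> (forall y, X y -> pop_risk P f S xstar <= pop_risk P f S y) ->
  (forall k, X (x k)) ->
  0 < delta < 1 ->
  ((1 - delta)%:E <=
   P [set w | (forall kg : 'I_K.+1,
        (forall k, emp_risk f Ss w (x kg) <= emp_risk f Ss w (x k)) ->
        pop_risk P f S (x kg) - pop_risk P f S xstar <=
        2 * Num.max
          (\big[Num.min/pop_risk P f S (x ord0)]_(k < K.+1) pop_risk P f S (x k)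
             - pop_risk P f S xstar)
          (32 * L ^+ 2 / (mu * n%:R) * ln (2 * K%:R / delta)))%R])%E.
Proof.
move=> nrmP _ _ n_gt0 iid _ f_meas f_int [N [mN PN f_lip]] mu_gt0 F_sc Xxs xs_min Xx
  /andP[delta_gt0 delta_lt1].
set F := pop_risk P f S.
have [b -> b_min] := bigmin_attained ord0 (fun k => F (x k)).
set c := 32 * L ^+ 2 / (mu * n%:R) * ln (2 * K%:R / delta).
pose bad k := 2 * Num.max (F (x b) - F xstar) c < F (x k) - F xstar.
have good_b : ~~ bad b.
  have := xs_min _ (Xx b); have : F (x b) - F xstar <= Num.max (F (x b) - F xstar) c.
    by rewrite le_max lexx.
  by rewrite /bad -leNgt -/F; lra.
have card_bad : (#|bad| <= K)%N by exact: card_ord_notin_le good_b.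
pose E k := [set w | (0 <= \sum_i (f (x b) (Ss i w) - f (x k) (Ss i w)))%R].
apply: (prob_ge_union_bound P _ bad E _ (delta / K%:R)).
- move=> k; apply: (measurable_sum_ge0 iid (fun s => f (x b) s - f (x k) s)).
  by apply: measurable_funB; exact: f_meas.
- move=> k bad_k; apply: (prob_emp_prefers_le nrmP n_gt0 iid f_meas f_int mN PN f_lip mu_gt0
    F_sc Xxs xs_min) => //.
  by rewrite ler1n; apply: leq_trans _ card_bad; apply/card_gt0P; exists k.
- exact: natr_mul_div_le _ _ _ card_bad (ltW delta_gt0).
- apply: measurable_argmin_event => k; exact: (measurable_emp_risk iid f_meas).
move=> w not_E kg kg_min; rewrite leNgt; apply/negP => bad_kg.
by apply: (not_E kg bad_kg); move: (kg_min b); rewrite (emp_risk_le_sumE n_gt0).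
Qed.
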